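(* Assume no treatment anticipation, missingness as an absorbing state, random sampling, and Principal Parallel Trends: $$\mathbb{E}[Y_{i2}(0)-Y_{i1}\mid G_i=1,V_i=AO]=\mathbb{E}[Y_{i2}(0)-Y_{i1}\mid G_i=0,V_i=AO].$$ Assume moreover that, conditional on $S_{i2}=1$ and $G_i=g$ ($g\in\{0,1\}$), $\ddot Y_i$ is continuously distributed with finite mean, and that $\pi_1,\pi_0\in(0,1]$ are known. Define $$\Delta^{LB}=\mathbb{E}[\ddot Y_i\mid G_i=1,S_{i2}=1,\ddot Y_i\le \ddot y^1_{\pi_1}]-\mathbb{E}[\ddot Y_i\mid G_i=0,S_{i2}=1,\ddot Y_i\ge \ddot y^0_{1-\pi_0}],$$ $$\Delta^{UB}=\mathbb{E}[\ddot Y_i\mid G_i=1,S_{i2}=1,\ddot Y_i\ge \ddot y^1_{1-\pi_1}]-\mathbb{E}[\ddot Y_i\mid G_i=0,S_{i2}=1,\ddot Y_i\le \ddot y^0_{\pi_0}].$$ Then $$\Delta^{LB}\le \mathrm{ATT}_{AO}\le\Delta^{UB}.$$ Moreover, these bounds are sharp: they are the tightest bounds on $\mathrm{ATT}_{AO}$ that are compatible with the assumptions and the distribution of the observed data.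
   Context: Setting (two groups, two periods). Units $i$ are observed in periods $t\in\{1,2\}$. $G_i\in\{0,1\}$ indicates that unit $i$ is treated in period 2; nobody is treated in period 1. Under SUTVA, each unit has potential outcomes $Y_{i2}(1),Y_{i2}(0)$ and potential selection indicators $S_{i2}(1),S_{i2}(0)\in\{0,1\}$. Here $S=1$ means the outcome is observed and well-defined. The observed quantities are $Y_{i2}=G_iY_{i2}(1)+(1-G_i)Y_{i2}(0)$ and $S_{i2}=G_iS_{i2}(1)+(1-G_i)S_{i2}(0)$. No treatment anticipation: the period-1 outcome $Y_{i1}$ and selection $S_{i1}$ do not depend on the period-2 treatment, so they are common to both treatment regimes. In particular $Y_{i1}=Y_{i1}(0)$. Missingness is absorbing: $S_{i1}=0\Rightarrow S_{i2}=0$, also for both potential selection indicators. Random sampling: $\{Y_{i1},Y_{i2},S_{i1},S_{i2},G_i\}_{i=1}^N$ are i.i.d. Principal strata: $V_i$ is the stratum defined by $(S_{i2}(0),S_{i2}(1))$. The strata are - $AO$ (Always-Observed): $(1,1)$; - $NO$ (Never-Observed): $(0,0)$; - $OC$ (observed only in control): $(1,0)$; - $OT$ (observed only in treatment): $(0,1)$. The target estimand is $\mathrm{ATT}_{AO}=\mathbb{E}[Y_{i2}(1)-Y_{i2}(0)\mid G_i=1,V_i=AO]$. Further notation: - $\ddot Y_i=Y_{i2}-Y_{i1}$. - $\ddot y^g_q=F^{-1}(q)$, where $F$ is the c.d.f. of $\ddot Y$ conditional on $S_2=1,G=g$. - $\pi_1=\Pr(S_{i2}(0)=1\mid G_i=1,S_{i2}(1)=1)$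 and $\pi_0=\Pr(S_{i2}(1)=1\mid G_i=0,S_{i2}(0)=1)$. These are the proportions of Always-Observed units among the units observed in period 2 in the treatment and control group, respectively. *)

From HB Require Import structures.
From mathcomp Require Import all_boot all_order all_algebra.
From mathcomp Require Import all_classical all_reals all_analysis.
Set Implicit Arguments. Unset Strict Implicit. Unset Printing Implicit Defensive.
Import Order.TTheory GRing.Theory Num.Theory.
Import numFieldNormedType.Exports.
Local Open Scope classical_set_scope.
Local Open Scope ring_scope.

Section DiD.
Context {R : realType} {d : measure_display} {T : measurableType d}.
Variable P : probability T R.

Definition cprob (A B : set T) : R := fine (P (A `&` B)) / fine (P B).

Definition cexp (X : T -> R) (A : set T) : R :=
  fine (\int[P]_(w in A) (X w)%:E) / fine (P A).

Definition grp (G : set T) (g : bool) : set T := if g then G else ~` G.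

Definition obsY2 (G : set T) (Y20 Y21 : T -> R) : T -> R :=
  fun w => \1_G w * Y21 w + (1 - \1_G w) * Y20 w.

Definition obsS2 (G S20 S21 : set T) : set T :=
  (G `&` S21) `|` (~` G `&` S20).

Definition AO (S20 S21 : set T) : set T := S20 `&` S21.

Definition Ydd (G : set T) (Y1 Y20 Y21 : T -> R) : T -> R :=
  fun w => obsY2 G Y20 Y21 w - Y1 w.

Definition ccdf (X : T -> R) (A : set T) (y : R) : R :=
  cprob [set w | X w <= y] A.

(* generalized inverse F^{-1}(q) = inf {y | q <= F y}, in the extended reals
   (it is -oo for q = 0 and may be +oo for q = 1). *)
Definition quantile (F : R -> R) (q : R) : \bar R :=
  ereal_inf (EFin @` [set y | q <= F y]).

Definition pi1 (G S20 S21 : set T) : R := cprob S20 (G `&` S21).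
Definition pi0 (G S20 S21 : set T) : R := cprob S21 (~` G `&` S20).

Definition ATT_AO (G S20 S21 : set T) (Y20 Y21 : T -> R) : R :=
  cexp (fun w => Y21 w - Y20 w) (G `&` AO S20 S21).

Definition Fdd (G S20 S21 : set T) (Y1 Y20 Y21 : T -> R) (g : bool) : R -> R :=
  ccdf (Ydd G Y1 Y20 Y21) (obsS2 G S20 S21 `&` grp G g).

Definition DeltaLB (G S20 S21 : set T) (Y1 Y20 Y21 : T -> R) : R :=
  let Y := Ydd G Y1 Y20 Y21 in
  let S2 := obsS2 G S20 S21 in
  cexp Y (G `&` S2 `&`
          [set w | ((Y w)%:E <= quantile (Fdd G S20 S21 Y1 Y20 Y21 true)
                                          (pi1 G S20 S21))%E])
  - cexp Y (~` G `&` S2 `&`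
          [set w | (quantile (Fdd G S20 S21 Y1 Y20 Y21 false)
                             (1 - pi0 G S20 S21) <= (Y w)%:E)%E]).

Definition DeltaUB (G S20 S21 : set T) (Y1 Y20 Y21 : T -> R) : R :=
  let Y := Ydd G Y1 Y20 Y21 in
  let S2 := obsS2 G S20 S21 in
  cexp Y (G `&` S2 `&`
          [set w | (quantile (Fdd G S20 S21 Y1 Y20 Y21 true)
                             (1 - pi1 G S20 S21) <= (Y w)%:E)%E])
  - cexp Y (~` G `&` S2 `&`
          [set w | ((Y w)%:E <= quantile (Fdd G S20 S21 Y1 Y20 Y21 false)
                                          (pi0 G S20 S21))%E]).

(* All assumptions of the proposition, for a model of a single (generic) unit:
   treatment G, period-1 selection S1 and outcome Y1 (no anticipation: these are
   common to both regimes), potential selections S20 S21, potential outcomes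
   Y20 Y21. *)
Definition model_ok (G S1 S20 S21 : set T) (Y1 Y20 Y21 : T -> R) : Prop :=
  [/\
      [/\ measurable G, measurable S1, measurable S20 & measurable S21] /\
      [/\ measurable_fun setT Y1, measurable_fun setT Y20
        & measurable_fun setT Y21],
      (forall w, ~ S1 w -> ~ S20 w /\ ~ S21 w),
      [/\ P.-integrable (G `&` AO S20 S21) (fun w => (Y20 w - Y1 w)%:E),
          P.-integrable (~` G `&` AO S20 S21) (fun w => (Y20 w - Y1 w)%:E)
        & (cexp (fun w => Y20 w - Y1 w) (G `&` AO S20 S21)
           = cexp (fun w => Y20 w - Y1 w) (~` G `&` AO S20 S21))],
      (* conditional on S_2 = 1, G = g: Ydd is continuously distributed with
         finite mean (and the conditioning event has positive probability) *)
      (forall g : bool,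
        [/\ 0 < fine (P (obsS2 G S20 S21 `&` grp G g)),
            continuous (Fdd G S20 S21 Y1 Y20 Y21 g)
          & P.-integrable (obsS2 G S20 S21 `&` grp G g)
              (fun w => (Ydd G Y1 Y20 Y21 w)%:E)]) &
      (0 < pi1 G S20 S21 <= 1) /\ (0 < pi0 G S20 S21 <= 1)].

Definition compatible (G S1 : set T) (Y1 : T -> R)
    (S20 S21 : set T) (Y20 Y21 : T -> R)
    (S20' S21' : set T) (Y20' Y21' : T -> R) : Prop :=
  [/\ model_ok G S1 S20' S21' Y1 Y20' Y21',
      obsS2 G S20' S21' = obsS2 G S20 S21,
      obsY2 G Y20' Y21' = obsY2 G Y20 Y21,
      pi1 G S20' S21' = pi1 G S20 S21
    & (pi0 G S20' S21' = pi0 G S20 S21)].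

End DiD.

From Pilot Require Import Defs.
From HB Require Import structures.
From mathcomp Require Import all_boot all_order all_algebra.
From mathcomp Require Import all_classical all_reals all_analysis.
From mathcomp Require Import ring lra measurable_realfun.
Import Order.TTheory GRing.Theory Num.Theory.
Import numFieldNormedType.Exports.
Local Open Scope classical_set_scope.
Local Open Scope ring_scope.

(* Under Principal Parallel Trends the untreated trends cancel, so ATT_AO is the
   mean of Ydd over the treated Always-Observed units minus its mean over the
   control Always-Observed units.  In each group the Always-Observed units form an
   unobserved subpopulation, of known relative mass pi_g, of the units observed in
   period 2; as Ydd is continuously distributed there, the tails of relative mass
   pi_g have exactly that mass, and any such subpopulation has a mean between the
   means of the lower and of the upper tail.  The bounds are attained: declaring
   one tail in each group to be the Always-Observed units, and choosing Y2(0) of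
   the treated ones so that parallel trends hold, gives a model compatible with the
   observed data whose ATT_AO is the bound. *)

Section probability_facts.
Context {R : realType} {d : measure_display} {T : measurableType d}.
Variable P : probability T R.

Lemma measureEfine {A : set T} : measurable A -> P A = (fine (P A))%:E.
Proof. by move=> mA; rewrite fineK // fin_num_measure. Qed.

Lemma fine_measure_ge0 (A : set T) : 0 <= fine (P A).
Proof. exact/fine_ge0/measure_ge0. Qed.

Lemma le_fine_measure {A B : set T} : measurable A -> measurable B ->
  A `<=` B -> fine (P A) <= fine (P B).
Proof.
move=> mA mB AB; rewrite -lee_fin -!measureEfine //.
by apply: le_measure => //; rewrite inE.
Qed.

Lemma fine_measureI_cprob (A B : set T) :
  0 < fine (P B) -> fine (P (A `&` B)) = cprob P A B * fine (P B).
Proof. by move=> PB; rewrite /cprob divfK // gt_eqF. Qed.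

Lemma fine_measure_inj {A B : set T} : measurable A -> measurable B ->
  fine (P A) = fine (P B) -> P A = P B.
Proof. by move=> mA mB AB; rewrite (measureEfine mA) (measureEfine mB) AB. Qed.

Lemma fine_measureDI {A B : set T} : measurable A -> measurable B ->
  fine (P A) = fine (P (A `\` B)) + fine (P (A `&` B)).
Proof.
move=> mA mB; have mAB : measurable (A `\` B) by exact: measurableD.
have mAIB : measurable (A `&` B) by exact: measurableI.
rewrite -fineD ?fin_num_measure // -measureU //; last first.
  by rewrite setDE setIACA setICl setI0.
by rewrite setDE -setIUr setUCl setIT.
Qed.

Lemma integral_setDI {Y : T -> R} {A C : set T} : measurable A ->
  measurable C -> measurable_fun setT Y ->
  (\int[P]_(x in A) (Y x)%:E = \int[P]_(x in A `&` C) (Y x)%:E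
      + \int[P]_(x in A `\` C) (Y x)%:E)%E.
Proof.
move=> mA mC mY.
rewrite {1}(_ : A = (A `&` C) `|` (A `\` C)); last first.
  by rewrite setDE -setIUr setUCr setIT.
rewrite integral_setU //.
- exact: measurableI.
- exact: measurableD.
- by apply/measurable_EFinP; apply: measurable_funS mY.
- by apply/disj_set2P; rewrite setDE setIACA setICr setI0.
Qed.

Lemma measurable_lee_cst (Y : T -> R) (q : \bar R) : measurable_fun setT Y ->
  measurable [set w | ((Y w)%:E <= q)%E].
Proof.
move=> mY; rewrite -[X in measurable X]setTI.
by apply: measurable_lee => //; exact/measurable_EFinP.
Qed.

Lemma measurable_cst_lee (Y : T -> R) (q : \bar R) : measurable_fun setT Y ->
  measurable [set w | (q <= (Y w)%:E)%E].
Proof.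
move=> mY; rewrite -[X in measurable X]setTI.
by apply: measurable_lee => //; exact/measurable_EFinP.
Qed.

Lemma measurable_ler_cst (Y : T -> R) (r : R) : measurable_fun setT Y ->
  measurable [set w | Y w <= r].
Proof.
by move=> mY; under eq_set do rewrite -lee_fin; exact: measurable_lee_cst.
Qed.

Lemma measurable_cst_ler (Y : T -> R) (r : R) : measurable_fun setT Y ->
  measurable [set w | r <= Y w].
Proof.
by move=> mY; under eq_set do rewrite -lee_fin; exact: measurable_cst_lee.
Qed.

End probability_facts.

Section conditional_expectation.
Context {R : realType} {d : measure_display} {T : measurableType d}.
Variable P : probability T R.

Lemma eq_cexp {f g : T -> R} {D : set T} : (forall w, D w -> f w = g w) ->
  cexp P f D = cexp P g D.
Proof.
move=> fg; rewrite /cexp; congr (fine _ / _).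
by apply: eq_integral => w /[!inE] Dw; rewrite fg.
Qed.

Lemma cexpB (f g : T -> R) (D : set T) : measurable D ->
  P.-integrable D (fun w => (f w)%:E) -> P.-integrable D (fun w => (g w)%:E) ->
  cexp P (fun w => f w - g w) D = cexp P f D - cexp P g D.
Proof.
move=> mD intf intg; rewrite /cexp -mulrBl; congr (_ / _).
by rewrite -fineB ?integrable_fin_num // -integralB.
Qed.

Lemma cexp_cst (c : R) (D : set T) : measurable D -> 0 < fine (P D) ->
  cexp P (fun _ => c) D = c.
Proof.
move=> mD PD; rewrite /cexp (_ : (fun _ => c%:E) = cst c%:E) //.
by rewrite integral_cst // fineM ?fin_num_measure //= mulfK // gt_eqF.
Qed.

Lemma le_integral_setD_threshold (Y : T -> R) (B A L : set T) (t : \bar R) :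
  measurable B -> measurable A -> measurable L -> A `<=` B -> L `<=` B ->
  measurable_fun setT Y -> P.-integrable B (fun w => (Y w)%:E) ->
  P A = P L ->
  (forall w, L w -> ~ A w -> ((Y w)%:E <= t)%E) ->
  (forall w, A w -> ~ L w -> (t <= (Y w)%:E)%E) ->
  (\int[P]_(x in L `\` A) (Y x)%:E <= \int[P]_(x in A `\` L) (Y x)%:E)%E.
Proof.
move=> mB mA mL AB LB mY intY PAL YL YA.
have mLA : measurable (L `\` A) by exact: measurableD.
have mAL : measurable (A `\` L) by exact: measurableD.
have PLA_AL : P (L `\` A) = P (A `\` L).
  apply: fine_measure_inj => //.
  have := fine_measureDI P mL mA; have := fine_measureDI P mA mL.
  by rewrite setIC (measureEfine P mA) (measureEfine P mL) in PAL *; case: PAL; lra.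
case: t YL YA => [r| |] YL YA.
- have YL_r : (\int[P]_(x in L `\` A) (Y x)%:E <= \int[P]_(x in L `\` A) r%:E)%E.
    apply: le_integral => //.
    + by apply: integrableS intY => // w [/LB].
    + exact: finite_measure_integrable_cst.
    + by move=> w /[!inE] -[Lw nAw]; exact: YL.
  have r_YA : (\int[P]_(x in A `\` L) r%:E <= \int[P]_(x in A `\` L) (Y x)%:E)%E.
    apply: le_integral => //.
    + exact: finite_measure_integrable_cst.
    + by apply: integrableS intY => // w [/AB].
    + by move=> w /[!inE] -[Aw nLw]; exact: YA.
  apply: le_trans YL_r (le_trans _ r_YA); rewrite !integral_cst // le_eqVlt.
  by apply/orP; left; apply/eqP; congr (_ * _)%E; exact: PLA_AL.
- have AL0 : A `\` L = set0.
    by apply/seteqP; split => // w [Aw nLw]; have := YA w Aw nLw; rewrite leye_eq.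
  have PLA0 : P (L `\` A) = 0 by rewrite PLA_AL AL0 measure0.
  rewrite AL0 integral_set0 null_set_integral //.
  by apply/measurable_EFinP; exact: measurable_funS mY.
- have LA0 : L `\` A = set0.
    by apply/seteqP; split => // w [Lw nAw]; have := YL w Lw nAw; rewrite leeNy_eq.
  have PAL0 : P (A `\` L) = 0 by rewrite -PLA_AL LA0 measure0.
  rewrite LA0 integral_set0 null_set_integral //.
  by apply/measurable_EFinP; exact: measurable_funS mY.
Qed.

Lemma le_cexp_threshold (Y : T -> R) (B A L : set T) (t : \bar R) :
  measurable B -> measurable A -> measurable L -> A `<=` B -> L `<=` B ->
  measurable_fun setT Y -> P.-integrable B (fun w => (Y w)%:E) ->
  P A = P L ->
  (forall w, L w -> ~ A w -> ((Y w)%:E <= t)%E) ->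
  (forall w, A w -> ~ L w -> (t <= (Y w)%:E)%E) ->
  cexp P Y L <= cexp P Y A.
Proof.
move=> mB mA mL AB LB mY intY PAL YL YA.
rewrite /cexp -PAL; apply: ler_wpM2r; first by rewrite invr_ge0 fine_measure_ge0.
apply: fine_le; try by apply: integrable_fin_num => //; exact: integrableS intY.
rewrite (integral_setDI P mL mA mY) (integral_setDI P mA mL mY) setIC.
by apply: leeD2l; exact: (@le_integral_setD_threshold Y B A L t).
Qed.

End conditional_expectation.

Section quantile.
Context {R : realType}.
Implicit Types (F : R -> R) (p : R).

Lemma continuous_dist_lt {F} x {e} : continuous F -> 0 < e ->
  exists2 del, 0 < del & forall y, `|x - y| < del -> `|F x - F y| < e.
Proof.
move=> cF e0; have /cvgrPdist_lt/(_ e e0)/nbhs_ballP[del /= del0 Fdel] := cF x.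
by exists del => // y xy; apply: Fdel.
Qed.

Lemma quantile_lbound F p y : p <= F y -> (quantile F p <= y%:E)%E.
Proof. by move=> pFy; apply: ereal_inf_lbound; exists y. Qed.

(* By continuity, [F r > p] would put a point of [[set y | p <= F y]] below its
   infimum [r], and [F r < p] would make [F < p] on a neighbourhood of [r], which
   must contain points of that set. *)
Lemma continuous_quantile_fin {F p r} :
  continuous F -> quantile F p = r%:E -> F r = p.
Proof.
move=> cF qr.
have lb y : p <= F y -> r <= y by move=> /quantile_lbound; rewrite qr lee_fin.
apply/eqP; rewrite eq_le; apply/andP; split; rewrite leNgt; apply/negP => Fr_p.
- have Fr_p' : 0 < F r - p by rewrite subr_gt0.
  have [del del0 Fdel] := continuous_dist_lt r cF Fr_p'.
  have near : `|r - (r - del / 2)| < del.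
    by rewrite opprB addrC subrK ger0_norm ?divr_ge0 ?ltW //; lra.
  have p_F : p <= F (r - del / 2).
    by have := Fdel _ near; have := ler_norm (F r - F (r - del / 2)); lra.
  by have := lb _ p_F; lra.
- have p_Fr : 0 < p - F r by rewrite subr_gt0.
  have [del del0 Fdel] := continuous_dist_lt r cF p_Fr.
  have : (quantile F p < (r + del)%:E)%E by rewrite qr lte_fin; lra.
  move=> /ereal_inf_lt[_ [y /= pFy <-]]; rewrite lte_fin => yr.
  have ry := lb y pFy.
  have near : `|r - y| < del by rewrite distrC ger0_norm; lra.
  by have := Fdel _ near; have := ler_norm (F y - F r); rewrite distrC; lra.
Qed.

Lemma quantile_pinfty F p : quantile F p = +oo%E -> forall y, F y < p.
Proof.
move=> qoo y; rewrite ltNge; apply/negP => /quantile_lbound.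
by rewrite qoo leye_eq.
Qed.

Lemma quantile_ninfty {F p} : {homo F : x y / x <= y} ->
  quantile F p = -oo%E -> forall y, p <= F y.
Proof.
move=> Fmono qoo y0; rewrite leNgt; apply/negP => Fy0_p.
have : (y0%:E <= quantile F p)%E.
  apply: le_ereal_inf_tmp => _ [y /= pFy <-]; rewrite lee_fin leNgt; apply/negP.
  by move=> /ltW/Fmono; lra.
by rewrite qoo leeNy_eq.
Qed.

End quantile.

Section conditional_cdf.
Context {R : realType} {d : measure_display} {T : measurableType d}.
Variables (P : probability T R) (Y : T -> R) (B : set T).
Hypotheses (mB : measurable B) (mY : measurable_fun setT Y).
Hypothesis PB_gt0 : 0 < fine (P B).

Local Notation F := (Defs.ccdf P Y B).

Definition lower_tail (p : R) : set T :=
  B `&` [set w | ((Y w)%:E <= quantile F p)%E].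

Definition upper_tail (p : R) : set T :=
  B `&` [set w | (quantile F (1 - p) <= (Y w)%:E)%E].

Lemma measurable_lower_tail p : measurable (lower_tail p).
Proof. by apply: measurableI => //; exact: measurable_lee_cst. Qed.

Lemma measurable_upper_tail p : measurable (upper_tail p).
Proof. by apply: measurableI => //; exact: measurable_cst_lee. Qed.

Lemma fine_measure_ccdf r : fine (P ([set w | Y w <= r] `&` B)) = F r * fine (P B).
Proof. exact: fine_measureI_cprob. Qed.

Lemma ccdf_nondecreasing : {homo F : x y / x <= y}.
Proof.
move=> x y xy; rewrite /Defs.ccdf /cprob.
apply: ler_wpM2r; first by rewrite invr_ge0 fine_measure_ge0.
apply: le_fine_measure; try by apply: measurableI => //; exact: measurable_ler_cst.
by move=> w [/= Yx Bw]; split => //=; apply: le_trans xy.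
Qed.

Lemma exists_ccdf_lt {p} : 0 < p -> exists y, F y < p.
Proof.
move=> p_gt0.
pose E n := [set w | Y w <= - n%:R] `&` B.
have mE n : measurable (E n) by apply: measurableI => //; exact: measurable_ler_cst.
have E_cap : \bigcap_n E n = set0.
  apply/seteqP; split => // w /= Ew.
  have [/= + _] := Ew (Num.Def.archi_bound `|Y w|) Logic.I.
  have := archi_boundP (normr_ge0 (Y w)); have := ler_norm (- Y w).
  by rewrite normrN; lra.
have E_homo : {homo E : n m / (n <= m)%N >-> (m <= n)%O}.
  move=> n m nm; rewrite subsetEset => w [/= Ynw Bw]; split => //=.
  by apply: le_trans Ynw _; rewrite lerN2 ler_nat.
have PE0_fin : (P (E 0%N) < +oo)%E by rewrite (measureEfine P (mE 0%N)) ltry.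
have := nonincreasing_cvg_mu PE0_fin mE; rewrite E_cap measure0.
move=> /(_ measurable0 E_homo)/fine_cvgP[_ /cvgrPdist_lt].
have e_gt0 : 0 < p * fine (P B) by rewrite mulr_gt0.
move=> /(_ _ e_gt0)[N _ /(_ N (leqnn N))].
rewrite /= sub0r normrN ger0_norm ?fine_measure_ge0 // => PEN.
by exists (- N%:R); rewrite /Defs.ccdf /cprob ltr_pdivrMr.
Qed.

Lemma exists_ccdf_ge {p} : p < 1 -> exists y, p <= F y.
Proof.
move=> p_lt1.
pose E n := [set w | Y w <= n%:R] `&` B.
have mE n : measurable (E n) by apply: measurableI => //; exact: measurable_ler_cst.
have E_cup : \bigcup_n E n = B.
  apply/seteqP; split => w /=; first by move=> [n _ []].
  move=> Bw; exists (Num.Def.archi_bound `|Y w|) => //; split => //=.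
  by have := archi_boundP (normr_ge0 (Y w)); have := ler_norm (Y w); lra.
have E_homo : {homo E : n m / (n <= m)%N >-> (n <= m)%O}.
  move=> n m nm; rewrite subsetEset => w [/= Ynw Bw]; split => //=.
  by apply: le_trans Ynw _; rewrite ler_nat.
have : (P \o E) n @[n --> \oo] --> (fine (P B))%:E.
  rewrite -(measureEfine P mB) -[in X in _ --> X]E_cup.
  by apply: nondecreasing_cvg_mu; rewrite ?E_cup.
move=> /fine_cvgP[_ /cvgrPdist_lt].
have e_gt0 : 0 < (1 - p) * fine (P B) by rewrite mulr_gt0 // subr_gt0.
move=> /(_ _ e_gt0)[N _ /(_ N (leqnn N)) /= PEN].
have := ler_norm (fine (P B) - fine (P (E N))).
by exists N%:R; rewrite /Defs.ccdf /cprob ler_pdivlMr // -/(E N); nra.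
Qed.

Hypothesis cF : continuous F.

Lemma continuous_ccdf_atom0 r :
  fine (P ([set w | Y w <= r] `&` B `&` [set w | r <= Y w])) = 0.
Proof.
set X := [set w | Y w <= r] `&` B.
have mX : measurable X by apply: measurableI => //; exact: measurable_ler_cst.
apply/eqP; rewrite eq_le fine_measure_ge0 andbT leNgt; apply/negP => atom_gt0.
have [del del0 Fdel] := continuous_dist_lt r cF (divr_gt0 atom_gt0 PB_gt0).
set y := r - del / 2.
set Z := [set w | Y w <= y] `&` B.
have mZ : measurable Z by apply: measurableI => //; exact: measurable_ler_cst.
have := fine_measureDI P mX mZ.
have -> : X `&` Z = Z.
  apply/seteqP; split => w; first by case.
  by move=> [/= Yy Bw]; split => //; split => //=; apply: le_trans Yy _; rewrite /y; lra.
have atom_le : fine (P (X `&` [set w | r <= Y w])) <= fine (P (X `\` Z)).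
  apply: le_fine_measure.
  - by apply: measurableI => //; exact: measurable_cst_ler.
  - exact: measurableD.
  move=> w [[/= Yr Bw] /= rY]; split; first by split.
  by move=> [/= Yy _]; have := le_trans rY Yy; rewrite /y; lra.
have near : `|r - y| < del by rewrite /y opprB addrC subrK ger0_norm; lra.
have := Fdel _ near; rewrite ltr_pdivlMr //.
have := fine_measure_ccdf r; have := fine_measure_ccdf y; rewrite -/X -/Z.
have := ler_norm (F r - F y); have := fine_measure_ge0 P B.
nra.
Qed.

Lemma fine_measure_lower_tail p : 0 < p <= 1 ->
  fine (P (lower_tail p)) = p * fine (P B).
Proof.
rewrite /lower_tail; case/andP=> p_gt0 p_le1; case qE: (quantile F p) => [r| |].
- by rewrite -(continuous_quantile_fin cF qE) -fine_measure_ccdf setIC.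
- have -> : p = 1.
    apply/eqP; rewrite eq_le p_le1 /= leNgt; apply/negP => /exists_ccdf_ge[y].
    by rewrite leNgt quantile_pinfty.
  rewrite mul1r; congr (fine (P _)); apply/seteqP; split => w /=; first by case.
  by move=> Bw; split => //; rewrite leey.
- have [y] := exists_ccdf_lt p_gt0.
  by rewrite ltNge (quantile_ninfty ccdf_nondecreasing qE).
Qed.

Lemma fine_measure_upper_tail p : 0 < p <= 1 ->
  fine (P (upper_tail p)) = p * fine (P B).
Proof.
rewrite /upper_tail; case/andP=> p_gt0 p_le1; case qE: (quantile F (1 - p)) => [r| |].
- set X := [set w | Y w <= r] `&` B; set C := [set w | r <= Y w].
  have mX : measurable X by apply: measurableI => //; exact: measurable_ler_cst.
  have mC : measurable C by exact: measurable_cst_ler.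
  have BDC : B `\` C = X `\` C.
    apply/seteqP; split => w; last by move=> [[_ Bw] nC].
    move=> [Bw /= nC]; split => //; split => //=.
    by rewrite leNgt; apply/negP => /ltW.
  have := fine_measureDI P mB mC; have := fine_measureDI P mX mC.
  have := continuous_ccdf_atom0 r; have := fine_measure_ccdf r.
  rewrite -/X -/C BDC (continuous_quantile_fin cF qE); nra.
- have [|y] := @exists_ccdf_ge (1 - p); first lra.
  by rewrite leNgt quantile_pinfty.
- have -> : p = 1.
    apply/eqP; rewrite eq_le p_le1 /= leNgt; apply/negP => p_lt1.
    have [|y] := @exists_ccdf_lt (1 - p); first lra.
    by rewrite ltNge (quantile_ninfty ccdf_nondecreasing qE).
  rewrite mul1r; congr (fine (P _)); apply/seteqP; split => w /=; first by case.
  by move=> Bw; split => //; rewrite leNye.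
Qed.

Hypothesis intY : P.-integrable B (fun w => (Y w)%:E).

Lemma cexp_between_tails (A : set T) p : measurable A -> A `<=` B ->
  0 < p <= 1 -> fine (P A) = p * fine (P B) ->
  cexp P Y (lower_tail p) <= cexp P Y A <= cexp P Y (upper_tail p).
Proof.
move=> mA AB p01 PA; apply/andP; split.
- apply: (@le_cexp_threshold _ _ _ P Y B A _ (quantile F p)) => //.
  + exact: measurable_lower_tail.
  + by move=> w [].
  + apply: fine_measure_inj => //; first exact: measurable_lower_tail.
    by rewrite fine_measure_lower_tail.
  + by move=> w [_ YLq].
  + move=> w Aw nL; rewrite leNgt; apply/negP => /ltW YLq.
    by apply: nL; split => //; exact: AB.
- apply: (@le_cexp_threshold _ _ _ P Y B _ A (quantile F (1 - p))) => //.
  + exact: measurable_upper_tail.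
  + by move=> w [].
  + apply: fine_measure_inj => //; first exact: measurable_upper_tail.
    by rewrite fine_measure_upper_tail.
  + move=> w Aw nU; rewrite leNgt; apply/negP => /ltW qY.
    by apply: nU; split => //; exact: AB.
  + by move=> w [_ qY].
Qed.

End conditional_cdf.

Lemma measurable_obsY2 {R : realType} {d : measure_display}
    {T : measurableType d} (G : set T) (Z0 Z1 : T -> R) :
  measurable G -> measurable_fun setT Z0 -> measurable_fun setT Z1 ->
  measurable_fun setT (obsY2 G Z0 Z1).
Proof.
move=> mG mZ0 mZ1; have m1G : measurable_fun setT (\1_G : T -> R).
  exact: measurable_indic.
apply: (measurable_funD (f := fun w => \1_G w * Z1 w)).
  exact: measurable_funM.
apply: (measurable_funM (f := fun w => 1 - \1_G w)) => //.
by apply: (measurable_funB (f := cst 1)); first exact: measurable_cst.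
Qed.

Section did_model.
Context {R : realType} {d : measure_display} {T : measurableType d}.
Variables (P : probability T R) (G S1 S20 S21 : set T) (Y1 Y20 Y21 : T -> R).

Local Notation Y := (Ydd G Y1 Y20 Y21).

Lemma obsS2_treated : obsS2 G S20 S21 `&` grp G true = G `&` S21.
Proof.
apply/seteqP; split=> w; first by move=> [[[]|[]]].
by move=> [Gw S21w]; split => //; left.
Qed.

Lemma obsS2_control : obsS2 G S20 S21 `&` grp G false = ~` G `&` S20.
Proof.
apply/seteqP; split=> w; first by move=> [[[]|[]]].
by move=> [nGw S20w]; split => //; right.
Qed.

Lemma treated_obsS2 : G `&` obsS2 G S20 S21 = G `&` S21.
Proof. by rewrite setIC obsS2_treated. Qed.

Lemma control_obsS2 : ~` G `&` obsS2 G S20 S21 = ~` G `&` S20.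
Proof. by rewrite setIC obsS2_control. Qed.

Lemma Ydd_treated w : G w -> Y w = Y21 w - Y1 w.
Proof.
by move=> Gw; rewrite /Ydd /obsY2 indicE mem_set // subrr mul0r addr0 mul1r.
Qed.

Lemma Ydd_control w : ~ G w -> Y w = Y20 w - Y1 w.
Proof.
by move=> nGw; rewrite /Ydd /obsY2 indicE memNset // subr0 mul0r add0r mul1r.
Qed.

Lemma DeltaLBE : DeltaLB P G S20 S21 Y1 Y20 Y21 =
  cexp P Y (lower_tail P Y (G `&` S21) (pi1 P G S20 S21))
  - cexp P Y (upper_tail P Y (~` G `&` S20) (pi0 P G S20 S21)).
Proof.
by rewrite /DeltaLB /Fdd /= obsS2_treated obsS2_control treated_obsS2 control_obsS2.
Qed.

Lemma DeltaUBE : DeltaUB P G S20 S21 Y1 Y20 Y21 =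
  cexp P Y (upper_tail P Y (G `&` S21) (pi1 P G S20 S21))
  - cexp P Y (lower_tail P Y (~` G `&` S20) (pi0 P G S20 S21)).
Proof.
by rewrite /DeltaUB /Fdd /= obsS2_treated obsS2_control treated_obsS2 control_obsS2.
Qed.

Hypothesis ok : model_ok P G S1 S20 S21 Y1 Y20 Y21.

Let mG : measurable G. Proof. by case: ok => -[[]]. Qed.
Let mS20 : measurable S20. Proof. by case: ok => -[[]]. Qed.
Let mS21 : measurable S21. Proof. by case: ok => -[[]]. Qed.

Let mY : measurable_fun setT Y.
Proof.
case: ok => -[_ [mY1 mY20 mY21]] _ _ _ _.
by apply: measurable_funB => //; exact: measurable_obsY2.
Qed.

Let mtreated : measurable (G `&` S21). Proof. exact: measurableI. Qed.
Let mcontrol : measurable (~` G `&` S20).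
Proof. by apply: measurableI => //; exact: measurableC. Qed.

Let observed_treated :
  [/\ 0 < fine (P (G `&` S21)), continuous (Defs.ccdf P Y (G `&` S21))
    & P.-integrable (G `&` S21) (fun w => (Y w)%:E)].
Proof. by case: ok => _ _ _ /(_ true); rewrite /Fdd obsS2_treated. Qed.

Let observed_control :
  [/\ 0 < fine (P (~` G `&` S20)), continuous (Defs.ccdf P Y (~` G `&` S20))
    & P.-integrable (~` G `&` S20) (fun w => (Y w)%:E)].
Proof. by case: ok => _ _ _ /(_ false); rewrite /Fdd obsS2_control. Qed.

Lemma ATT_AO_cexp_Ydd : ATT_AO P G S20 S21 Y20 Y21 =
  cexp P Y (G `&` AO S20 S21) - cexp P Y (~` G `&` AO S20 S21).
Proof.
case: ok => _ _ [int_trend _ PPT] _ _; have [_ _ intY] := observed_treated.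
have mAO : measurable (G `&` AO S20 S21) by do 2 apply: measurableI => //.
rewrite /ATT_AO (eq_cexp P (g := fun w => Y w - (Y20 w - Y1 w))); last first.
  by move=> w [Gw _]; rewrite Ydd_treated //; ring.
rewrite cexpB //; last by apply: integrableS intY => // w [Gw [_ S21w]].
by rewrite PPT; congr (_ - _); apply: eq_cexp => w [nGw _]; rewrite Ydd_control.
Qed.

Lemma ATT_AO_bounds :
  DeltaLB P G S20 S21 Y1 Y20 Y21 <= ATT_AO P G S20 S21 Y20 Y21
                                 <= DeltaUB P G S20 S21 Y1 Y20 Y21.
Proof.
case: ok => _ _ _ _ [pi1_01 pi0_01].
have [PB1 cF1 intY1] := observed_treated; have [PB0 cF0 intY0] := observed_control.
have /andP[lower1 upper1] : cexp P Y (lower_tail P Y (G `&` S21) (pi1 P G S20 S21))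
    <= cexp P Y (G `&` AO S20 S21)
    <= cexp P Y (upper_tail P Y (G `&` S21) (pi1 P G S20 S21)).
  apply: cexp_between_tails => //.
  - by do 2 apply: measurableI => //.
  - by move=> w [Gw [_ S21w]].
  - by rewrite /AO setICA fine_measureI_cprob.
have /andP[lower0 upper0] : cexp P Y (lower_tail P Y (~` G `&` S20) (pi0 P G S20 S21))
    <= cexp P Y (~` G `&` AO S20 S21)
    <= cexp P Y (upper_tail P Y (~` G `&` S20) (pi0 P G S20 S21)).
  apply: cexp_between_tails => //.
  - by apply: measurableI; [exact: measurableC | exact: measurableI].
  - by move=> w [nGw [S20w _]].
  - by rewrite /AO (setIC S20) setICA fine_measureI_cprob.
by rewrite ATT_AO_cexp_Ydd DeltaLBE DeltaUBE; apply/andP; split; lra.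
Qed.

Section alternative_model.
Variables (L1 U0 : set T).
Hypotheses (mL1 : measurable L1) (L1_sub : L1 `<=` G `&` S21).
Hypothesis PL1 : fine (P L1) = pi1 P G S20 S21 * fine (P (G `&` S21)).
Hypotheses (mU0 : measurable U0) (U0_sub : U0 `<=` ~` G `&` S20).
Hypothesis PU0 : fine (P U0) = pi0 P G S20 S21 * fine (P (~` G `&` S20)).

(* [L1] and [U0] become the Always-Observed units of the two groups, and the
   treated ones get the untreated trend [Y2(0) - Y1] equal to the mean trend of
   [U0], so that Principal Parallel Trends holds. *)
Definition alt_S20 : set T := L1 `|` (~` G `&` S20).
Definition alt_S21 : set T := (G `&` S21) `|` U0.
Definition alt_Y20 : T -> R := obsY2 G Y20 (fun w => Y1 w + cexp P Y U0).

Lemma obsS2_alt : obsS2 G alt_S20 alt_S21 = obsS2 G S20 S21.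
Proof.
apply/seteqP; split => w.
- by move=> [[Gw [[]|/U0_sub[]]]|[nGw [/L1_sub[]|[]]]] //; [left | right].
- by move=> [[Gw S21w]|[nGw S20w]]; [left; split => //; left | right; split => //; right].
Qed.

Lemma obsY2_alt : obsY2 G alt_Y20 Y21 = obsY2 G Y20 Y21.
Proof.
apply/funext => w; rewrite /alt_Y20 /obsY2 indicE.
by have [Gw|nGw] := pselect (G w); [rewrite mem_set | rewrite memNset];
  rewrite ?subrr ?subr0 ?mul0r ?mul1r ?addr0 ?add0r.
Qed.

Lemma Ydd_alt : Ydd G Y1 alt_Y20 Y21 = Y.
Proof. by rewrite /Ydd obsY2_alt. Qed.

Lemma treated_AO_alt : G `&` AO alt_S20 alt_S21 = L1.
Proof.
apply/seteqP; split => w; first by move=> [Gw [[//|[]//] _]].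
by move=> /[dup] L1w /L1_sub[Gw S21w]; split => //; split; left.
Qed.

Lemma control_AO_alt : ~` G `&` AO alt_S20 alt_S21 = U0.
Proof.
apply/seteqP; split => w; first by move=> [nGw [_ [[]//|//]]].
by move=> /[dup] U0w /U0_sub[nGw S20w]; split => //; split; right.
Qed.

Lemma pi1_alt : pi1 P G alt_S20 alt_S21 = pi1 P G S20 S21.
Proof.
have [PB1 _ _] := observed_treated.
have treated_alt : G `&` alt_S21 = G `&` S21.
  apply/seteqP; split => w; first by move=> [Gw [//|/U0_sub[]]].
  by move=> [Gw S21w]; split => //; left.
by rewrite /pi1 /cprob setICA treated_AO_alt treated_alt PL1 mulfK // gt_eqF.
Qed.

Lemma pi0_alt : pi0 P G alt_S20 alt_S21 = pi0 P G S20 S21.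
Proof.
have [PB0 _ _] := observed_control.
have control_alt : ~` G `&` alt_S20 = ~` G `&` S20.
  apply/seteqP; split => w; first by move=> [nGw [/L1_sub[]|//]].
  by move=> [nGw S20w]; split => //; right.
rewrite /pi0 /cprob setICA (setIC alt_S21) control_AO_alt control_alt PU0.
by rewrite mulfK // gt_eqF.
Qed.

Lemma alt_trend_treated w : L1 w -> alt_Y20 w - Y1 w = cexp P Y U0.
Proof.
move=> /L1_sub[Gw _]; rewrite /alt_Y20 /obsY2 indicE mem_set //.
by rewrite subrr mul0r addr0 mul1r addrC addKr.
Qed.

Lemma alt_trend_control w : U0 w -> alt_Y20 w - Y1 w = Y w.
Proof.
move=> /U0_sub[nGw _]; rewrite /alt_Y20 /obsY2 indicE memNset //.
by rewrite subr0 mul0r add0r mul1r Ydd_control.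
Qed.

Let PL1_gt0 : 0 < fine (P L1).
Proof.
case: ok => _ _ _ _ [/andP[pi1_gt0 _] _]; have [PB1 _ _] := observed_treated.
by rewrite PL1 mulr_gt0.
Qed.

Lemma model_ok_alt : model_ok P G S1 alt_S20 alt_S21 Y1 alt_Y20 Y21.
Proof.
case: ok => -[[_ mS1 _ _] [mY1 mY20 mY21]] absorbing _ observed pi_01.
have [_ _ intY0] := observed_control.
split => //.
- split; split => //.
  + by apply: measurableU => //; exact: mcontrol.
  + exact: measurableU.
  + by apply: measurable_obsY2 => //; apply: measurable_funD.
- move=> w /absorbing[nS20w nS21w]; split.
  + by case=> [/L1_sub[]|[]].
  + by case=> [[]|/U0_sub[]].
- rewrite treated_AO_alt control_AO_alt; split.
  + apply: (eq_integrable mL1 (EFin \o cst (cexp P Y U0))).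
      by move=> w /[!inE] /alt_trend_treated ->.
    exact: finite_measure_integrable_cst.
  + apply: (eq_integrable mU0 (fun w => (Y w)%:E)).
      by move=> w /[!inE] /alt_trend_control ->.
    exact: integrableS intY0.
  + rewrite (eq_cexp P alt_trend_treated) (eq_cexp P alt_trend_control).
    by rewrite cexp_cst.
- by move=> g; rewrite /Fdd obsS2_alt Ydd_alt; exact: observed.
- by rewrite pi1_alt pi0_alt.
Qed.

Lemma ATT_AO_alt :
  ATT_AO P G alt_S20 alt_S21 alt_Y20 Y21 = cexp P Y L1 - cexp P Y U0.
Proof.
have [_ _ intY1] := observed_treated.
rewrite /ATT_AO treated_AO_alt (eq_cexp P (g := fun w => Y w - cexp P Y U0)).
  rewrite cexpB ?cexp_cst //; first exact: integrableS intY1.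
  exact: finite_measure_integrable_cst.
move=> w /[dup] L1w /L1_sub[Gw _].
by rewrite -(alt_trend_treated _ L1w) Ydd_treated //; ring.
Qed.

Lemma exists_compatible_ATT_AO :
  exists (S20' S21' : set T) (Y20' Y21' : T -> R),
    compatible P G S1 Y1 S20 S21 Y20 Y21 S20' S21' Y20' Y21' /\
    ATT_AO P G S20' S21' Y20' Y21' = cexp P Y L1 - cexp P Y U0.
Proof.
exists alt_S20, alt_S21, alt_Y20, Y21; split; last exact: ATT_AO_alt.
split; [exact: model_ok_alt | exact: obsS2_alt | exact: obsY2_alt
       | exact: pi1_alt | exact: pi0_alt].
Qed.

End alternative_model.

Lemma DeltaLB_sharp :
  exists (S20' S21' : set T) (Y20' Y21' : T -> R),
    compatible P G S1 Y1 S20 S21 Y20 Y21 S20' S21' Y20' Y21' /\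
    ATT_AO P G S20' S21' Y20' Y21' = DeltaLB P G S20 S21 Y1 Y20 Y21.
Proof.
case: ok => _ _ _ _ [pi1_01 pi0_01].
have [PB1 cF1 _] := observed_treated; have [PB0 cF0 _] := observed_control.
rewrite DeltaLBE; apply: exists_compatible_ATT_AO.
- exact: measurable_lower_tail.
- by move=> w [].
- exact: fine_measure_lower_tail.
- exact: measurable_upper_tail.
- by move=> w [].
- exact: fine_measure_upper_tail.
Qed.

Lemma DeltaUB_sharp :
  exists (S20' S21' : set T) (Y20' Y21' : T -> R),
    compatible P G S1 Y1 S20 S21 Y20 Y21 S20' S21' Y20' Y21' /\
    ATT_AO P G S20' S21' Y20' Y21' = DeltaUB P G S20 S21 Y1 Y20 Y21.
Proof.
case: ok => _ _ _ _ [pi1_01 pi0_01].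
have [PB1 cF1 _] := observed_treated; have [PB0 cF0 _] := observed_control.
rewrite DeltaUBE; apply: exists_compatible_ATT_AO.
- exact: measurable_upper_tail.
- by move=> w [].
- exact: fine_measure_upper_tail.
- exact: measurable_lower_tail.
- by move=> w [].
- exact: fine_measure_lower_tail.
Qed.

End did_model.

Theorem proposition1 (R : realType) (d : measure_display) (T : measurableType d)
    (P : probability T R) (G S1 S20 S21 : set T) (Y1 Y20 Y21 : T -> R) :
  model_ok P G S1 S20 S21 Y1 Y20 Y21 ->
  [/\ DeltaLB P G S20 S21 Y1 Y20 Y21 <= ATT_AO P G S20 S21 Y20 Y21
                                     <= DeltaUB P G S20 S21 Y1 Y20 Y21,
      (exists (S20' S21' : set T) (Y20' Y21' : T -> R),
          compatible P G S1 Y1 S20 S21 Y20 Y21 S20' S21' Y20' Y21' /\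
          ATT_AO P G S20' S21' Y20' Y21' = DeltaLB P G S20 S21 Y1 Y20 Y21)
    & (exists (S20' S21' : set T) (Y20' Y21' : T -> R),
          compatible P G S1 Y1 S20 S21 Y20 Y21 S20' S21' Y20' Y21' /\
          ATT_AO P G S20' S21' Y20' Y21' = DeltaUB P G S20 S21 Y1 Y20 Y21)].
Proof.
move=> ok; split; [exact: ATT_AO_bounds ok | exact: DeltaLB_sharp ok | exact: DeltaUB_sharp ok].
Qed.
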